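(* Let $1\le k<n$, let $\kappa_1,\dots,\kappa_n\in\mathbb C$ be pairwise distinct and $\beta_1,\dots,\beta_{n-1}\in\mathbb C^*$, with $\beta_0:=1$, and $I_k=\{1,\dots,k\}$. Let $A$ be the $k\times n$ matrix with $A_{ij}=\delta_{ij}$ for $j\le k$ and $$A_{ij}=\frac{\beta_{i-1}}{\beta_{j-1}(\kappa_j-\kappa_i)^2}\prod_{l\in I_k,\,l\ne i}\frac{\kappa_i-\kappa_l}{\kappa_j-\kappa_l}\qquad (i\le k<j\le n).$$ For every $k$-subset $J\subset[n]$, write $J=(I_k\setminus\{i_1,\dots,i_s\})\cup\{j_1,\dots,j_s\}$ with $i_1<\dots<i_s$ in $I_k$, $j_1<\dots<j_s$ in $[n]\setminus I_k$, $0\le s\le\min\{k,n-k\}$, and set $$\alpha_J=\frac{\prod_{1\le l<m\le s}(\kappa_{i_m}-\kappa_{i_l})^2(\kappa_{j_m}-\kappa_{j_l})^2}{\prod_{1\le l,m\le s}(\kappa_{j_m}-\kappa_{i_l})^2}\prod_{l=1}^s\frac{\beta_{i_l-1}}{\beta_{j_l-1}}$$ (empty products equal $1$). Then the maximal minor of $A$ on columns $J$ satisfies $A_J=\alpha_J\,K_{I_k}/K_J$, where $K_J=\prod_{i<j,\ i,j\in J}(\kappa_j-\kappa_i)$.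
   Context: Here $n=g+1$ for the genus-$g$ banana graph; $\alpha_J$ are the coefficients $\exp[\tfrac12\mathbf c_J^TR\mathbf c_J]\exp[\mathbf c_J^T\mathbf D]$ of the degenerate theta function at the Delaunay vertex $\mathbf c_J$, with $\mathbf D=(\log\beta_1,\dots,\log\beta_g)$, written explicitly. *)

From HB Require Import structures.
From mathcomp Require Import all_boot all_order all_algebra.
From mathcomp Require Import complex reals.
Set Implicit Arguments. Unset Strict Implicit. Unset Printing Implicit Defensive.
Import Order.TTheory GRing.Theory Num.Theory.
Local Open Scope ring_scope.

(* Indices are 0-based: paper index p in [n] corresponds to p-1 here.
   kappa m  = kappa_{m+1};  beta m = beta_m (so beta 0 = 1 and column/row index m
   carries beta_{(m+1)-1} = beta m). *)

Section Defs.
Variable F : fieldType.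
Variables (k n : nat) (kappa beta : nat -> F).

Definition matA : 'M[F]_(k, n) :=
  \matrix_(i < k, j < n)
    if (j < k)%N then (i == j :> nat)%:R
    else beta i / (beta j * (kappa j - kappa i) ^+ 2) *
         \prod_(l < k | l != i) ((kappa i - kappa l) / (kappa j - kappa l)).

(* maximal minor of M on the columns of J (taken in increasing order) *)
Definition maxminor (M : 'M[F]_(k, n)) (J : {set 'I_n}) (HJ : #|J| = k) : F :=
  \det (colsub (fun i : 'I_k => enum_val (cast_ord (esym HJ) i)) M).

Definition Ik : {set 'I_n} := [set j : 'I_n | (j < k)%N].

Definition KK (J : {set 'I_n}) : F :=
  \prod_(a in J) \prod_(b in J | (a < b)%N) (kappa b - kappa a).

Definition alpha (J : {set 'I_n}) : F :=
  let Rm := Ik :\: J in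
  let Ad := J :\: Ik in
  (\prod_(a in Rm) \prod_(b in Rm | (a < b)%N) (kappa b - kappa a) ^+ 2) *
  (\prod_(a in Ad) \prod_(b in Ad | (a < b)%N) (kappa b - kappa a) ^+ 2) /
  (\prod_(a in Rm) \prod_(b in Ad) (kappa b - kappa a) ^+ 2) *
  ((\prod_(a in Rm) beta a) / (\prod_(b in Ad) beta b)).
End Defs.

From HB Require Import structures.
From mathcomp Require Import all_boot all_order all_algebra.
From mathcomp Require Import complex reals.
From mathcomp Require Import ring.
Set Implicit Arguments. Unset Strict Implicit. Unset Printing Implicit Defensive.
Import Order.TTheory GRing.Theory Num.Theory.
Local Open Scope ring_scope.

(* With q_j = prod_(l in I_k, l <> j) (kappa_j - kappa_l), column j of A is
   diag(beta_i q_i) * (prod_(l in I_k, l <> i) (kappa_j - kappa_l))_i / (beta_j q_j^2).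
   The middle matrix is the matrix of Lagrange coefficients times a Vandermonde
   matrix, and at the nodes kappa_1..kappa_k it is diag(q_i); so
   A_J = (prod_(I_k) beta q^2 / prod_J beta q^2) * K_J / K_(I_k).
   Comparing with alpha_J K_(I_k) / K_J is done on squares, where every factor
   splits over the blocks I_k :&: J, I_k :\: J and J :\: I_k. *)

Section LagrangeMatrix.
Variables (F : fieldType) (k : nat) (kappa : nat -> F).

Definition node_gap (j : nat) : F := \prod_(l < k | l != j :> nat) (kappa j - kappa l).

Definition lagrange_poly (i : 'I_k) : {poly F} :=
  \prod_(l < k | l != i) ('X - (kappa l)%:P).

Definition lagrange_mx (y : 'I_k -> F) : 'M[F]_k :=
  \matrix_(i, p) \prod_(l < k | l != i) (y p - kappa l).

Lemma size_lagrange_poly i : (size (lagrange_poly i) <= k)%N.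
Proof.
rewrite /lagrange_poly -big_enum size_prod_XsubC -cardE cardC1.
by rewrite card_ord prednK // (leq_ltn_trans _ (ltn_ord i)).
Qed.

Lemma lagrange_mx_Vandermonde y :
  lagrange_mx y = \matrix_(i, m) (lagrange_poly i)`_m *m Vandermonde k (\row_p y p).
Proof.
apply/matrixP => i p; rewrite !mxE.
transitivity (lagrange_poly i).[y p].
  by rewrite horner_prod; apply: eq_bigr => l _; rewrite hornerXsubC.
rewrite (horner_coef_wide _ (size_lagrange_poly i)).
by apply: eq_bigr => m _; rewrite !mxE.
Qed.

Lemma lagrange_mx_nodes : lagrange_mx (fun p => kappa p) = diag_mx (\row_i node_gap i).
Proof.
apply/matrixP => i j; rewrite !mxE.
have [<-|neq_ij] := eqVneq i j; first by rewrite mulr1n.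
by rewrite mulr0n (bigD1 j) 1?eq_sym //= subrr mul0r.
Qed.

Lemma det_lagrange_mx y :
  \det (lagrange_mx y) * \det (Vandermonde k (\row_(p < k) kappa p)) =
  (\prod_(i < k) node_gap i) * \det (Vandermonde k (\row_p y p)).
Proof.
have := congr1 determinant (lagrange_mx_Vandermonde (fun p => kappa p)).
rewrite lagrange_mx_nodes det_diag det_mulmx.
under eq_bigr do rewrite mxE.
by move->; rewrite lagrange_mx_Vandermonde det_mulmx mulrAC.
Qed.

End LagrangeMatrix.

Section ColumnsOfA.
Variables (F : fieldType) (k n : nat) (kappa beta : nat -> F).
Hypothesis leq_kn : (k <= n)%N.
Hypothesis kappa_inj : forall a b, (a < n)%N -> (b < n)%N -> kappa a = kappa b -> a = b.
Hypothesis beta_neq0 : forall m, (m < n)%N -> beta m != 0.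

Lemma subr_kappa_neq0 a b : (a < n)%N -> (b < n)%N -> a != b -> kappa a - kappa b != 0.
Proof. by move=> an bn; apply: contraNneq => /eqP; rewrite subr_eq0 => /eqP/kappa_inj->. Qed.

Lemma node_gap_neq0 j : (j < n)%N -> node_gap k kappa j != 0.
Proof.
move=> jn; apply/prodf_neq0 => l neq_lj.
by rewrite subr_kappa_neq0 1?eq_sym // (leq_trans (ltn_ord l)).
Qed.

Lemma colsub_matA (c : 'I_k -> 'I_n) :
  colsub c (matA k n kappa beta) =
  diag_mx (\row_(i < k) (beta i * node_gap k kappa i))
    *m lagrange_mx kappa (fun p => kappa (c p))
    *m diag_mx (\row_(p < k) (beta (c p) * node_gap k kappa (c p) ^+ 2)^-1).
Proof.
apply/matrixP => i p; rewrite mul_mx_diag mul_diag_mx !mxE.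
have i_n : (i < n)%N := leq_trans (ltn_ord i) leq_kn.
have [bi_neq0 qi_neq0] := (beta_neq0 i_n, node_gap_neq0 i_n).
have [bc_neq0 qc_neq0] := (beta_neq0 (ltn_ord (c p)), node_gap_neq0 (ltn_ord (c p))).
have qiE : \prod_(l < k | l != i) (kappa i - kappa l) = node_gap k kappa i by [].
case: ifP => [c_k | c_nk].
  have [ci | ci] := eqVneq (i : nat) (c p).
    have qcE : \prod_(l < k | l != i) (kappa (c p) - kappa l) = node_gap k kappa (c p).
      by rewrite /node_gap -ci.
    by rewrite qcE -ci -[true%:R]/(1 : F); field; rewrite bi_neq0 qi_neq0.
  by rewrite (bigD1 (Ordinal c_k)) 1?eq_sym //= subrr !mul0r mulr0 mul0r.
set w := \prod_(l < k | l != i) (kappa (c p) - kappa l).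
have qcE : node_gap k kappa (c p) = (kappa (c p) - kappa i) * w.
  rewrite /node_gap (eq_bigl predT) => [|l]; last by apply: contraFN c_nk => /eqP <-.
  by rewrite (bigD1 i).
have ci_neq0 : kappa (c p) - kappa i != 0.
  by rewrite subr_kappa_neq0 //; apply: contraFN c_nk => /eqP ->.
have w_neq0 : w != 0 by apply: contraNneq qc_neq0; rewrite qcE => ->; rewrite mulr0.
have wE : \prod_(l | l != i) (kappa (c p) - kappa l) = w by [].
by rewrite prodf_div qiE wE qcE; field; rewrite w_neq0 ci_neq0 bc_neq0.
Qed.

End ColumnsOfA.

Lemma ltn_enum_val n (A : {set 'I_n}) (i j : 'I_#|A|) :
  (enum_val i < enum_val j)%N = (i < j)%N.
Proof.
have ltn_ord_trans : transitive (fun a b : 'I_n => (a < b)%N) :=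
  fun _ _ _ => @ltn_trans _ _ _.
have sorted_A : sorted (fun a b : 'I_n => (a < b)%N) (enum A).
  rewrite /enum_mem -enumT; apply: (sorted_filter ltn_ord_trans).
  by have := iota_ltn_sorted 0 n; rewrite -val_enum_ord sorted_map.
have lt_homo (a b : 'I_#|A|) : (a < b)%N -> (enum_val a < enum_val b)%N.
  move=> lt_ab; have x0 := enum_val a; rewrite !(enum_val_nth x0).
  by apply: (sorted_ltn_nth ltn_ord_trans) => //; rewrite inE -cardE.
case: (ltngtP i j) => [/lt_homo-> // | lt_ji | /val_inj->]; last exact: ltnn.
by rewrite leq_gtF // ltnW // lt_homo.
Qed.

Lemma big_Ik_cond (R : Type) (idx : R) (op : R -> R -> R) k n
    (P : pred nat) (G : nat -> R) : (k <= n)%N ->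
  \big[op/idx]_(a in Ik k n | P a) G a = \big[op/idx]_(i < k | P i) G i.
Proof.
move=> le_kn; rewrite (big_ord_widen_cond _ _ _ le_kn).
by apply: eq_bigl => a; rewrite inE andbC.
Qed.

Lemma big_Ik (R : Type) (idx : R) (op : R -> R -> R) k n (G : nat -> R) :
  (k <= n)%N -> \big[op/idx]_(a in Ik k n) G a = \big[op/idx]_(i < k) G i.
Proof.
by move=> le_kn; rewrite (big_ord_widen _ _ le_kn); apply: eq_bigl => a; rewrite inE.
Qed.

Section VandermondeMinors.
Variables (F : fieldType) (n : nat) (kappa : nat -> F).

Lemma det_Vandermonde_set (J : {set 'I_n}) :
  \det (Vandermonde #|J| (\row_(p < #|J|) kappa (enum_val p))) = KK kappa J.
Proof.
rewrite det_Vandermonde /KK (big_enum_val (A := mem J)); apply: eq_bigr => i _.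
rewrite (big_enum_val_cond (A := mem J)); apply: eq_big => [j|j _]; last by rewrite !mxE.
by rewrite ltn_enum_val.
Qed.

Lemma det_Vandermonde_Ik k : (k <= n)%N ->
  \det (Vandermonde k (\row_(p < k) kappa p)) = KK kappa (Ik k n).
Proof.
move=> le_kn; rewrite det_Vandermonde /KK.
rewrite (big_Ik _ _ (fun a => \prod_(b in Ik k n | (a < b)%N) (kappa b - kappa a))) //.
apply: eq_bigr => i _; rewrite (big_Ik_cond _ _ _ (fun b => kappa b - kappa i)) //.
by apply: eq_bigr => j _; rewrite !mxE.
Qed.

End VandermondeMinors.

Section SquaredDifferences.
Variables (F : fieldType) (n : nat) (kappa : nat -> F).
Implicit Types X Y B : {set 'I_n}.

Definition sqdiff_prod X Y : F :=
  \prod_(a in X) \prod_(b in Y | b != a) (kappa b - kappa a) ^+ 2.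

Definition sqdiff_prod_lt X Y : F :=
  \prod_(a in X) \prod_(b in Y | (a < b)%N) (kappa b - kappa a) ^+ 2.

Lemma sqrrB_C (x y : F) : (x - y) ^+ 2 = (y - x) ^+ 2.
Proof. by rewrite -opprB sqrrN. Qed.

Lemma KK_sqr X : KK kappa X ^+ 2 = sqdiff_prod_lt X X.
Proof. by rewrite /KK -prodrXl; apply: eq_bigr => a _; rewrite -prodrXl. Qed.

Lemma sqdiff_prodE X Y : sqdiff_prod X Y = sqdiff_prod_lt X Y * sqdiff_prod_lt Y X.
Proof.
rewrite /sqdiff_prod_lt [Z in _ = _ * Z](exchange_big_dep (fun b => b \in X)) /=;
  last by move=> ? ? _ /andP[].
rewrite -big_split; apply: eq_bigr => a Xa /=.
rewrite (bigID (fun b : 'I_n => (a < b)%N)) /=; congr (_ * _).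
  by apply: eq_bigl => b; rewrite -andbA (andb_idl (fun lt_ab => negbT (gtn_eqF lt_ab))).
apply: eq_big => [b|b _]; last exact: sqrrB_C.
by rewrite Xa -andbA -leqNgt -ltn_neqAle.
Qed.

Lemma sqdiff_prodC X Y : sqdiff_prod X Y = sqdiff_prod Y X.
Proof. by rewrite !sqdiff_prodE mulrC. Qed.

Lemma sqdiff_prod_id X : sqdiff_prod X X = KK kappa X ^+ 4.
Proof. by rewrite sqdiff_prodE -KK_sqr -exprD. Qed.

Lemma sqdiff_prod_setIDl X Y B :
  sqdiff_prod X Y = sqdiff_prod (X :&: B) Y * sqdiff_prod (X :\: B) Y.
Proof. exact: big_setID. Qed.

Lemma sqdiff_prod_setIDr X Y B :
  sqdiff_prod X Y = sqdiff_prod X (Y :&: B) * sqdiff_prod X (Y :\: B).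
Proof. by rewrite sqdiff_prodC (sqdiff_prod_setIDl _ _ B) !(sqdiff_prodC X). Qed.

Lemma sqdiff_prod_lt_setIDl X Y B :
  sqdiff_prod_lt X Y = sqdiff_prod_lt (X :&: B) Y * sqdiff_prod_lt (X :\: B) Y.
Proof. exact: big_setID. Qed.

Lemma sqdiff_prod_lt_setIDr X Y B :
  sqdiff_prod_lt X Y = sqdiff_prod_lt X (Y :&: B) * sqdiff_prod_lt X (Y :\: B).
Proof. by rewrite -big_split; apply: eq_bigr => a _; rewrite (big_setIDcond _ _ B). Qed.

Lemma KK_sqr_setID X B :
  KK kappa X ^+ 2 =
  KK kappa (X :&: B) ^+ 2 * KK kappa (X :\: B) ^+ 2 * sqdiff_prod (X :&: B) (X :\: B).
Proof.
rewrite !KK_sqr sqdiff_prodE (sqdiff_prod_lt_setIDl X X B).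
rewrite (sqdiff_prod_lt_setIDr (X :&: B) X B) (sqdiff_prod_lt_setIDr (X :\: B) X B).
by ring.
Qed.

Lemma prod_node_gap_sqr k X : (k <= n)%N ->
  (\prod_(a in X) node_gap k kappa a) ^+ 2 = sqdiff_prod X (Ik k n).
Proof.
move=> le_kn; rewrite -prodrXl; apply: eq_bigr => a _.
rewrite (big_Ik_cond _ _ (fun b : nat => b != a :> nat) (fun b => (kappa b - kappa a) ^+ 2)) //.
rewrite -prodrXl.
by apply: eq_bigr => l _; rewrite sqrrB_C.
Qed.

Hypothesis kappa_inj : forall a b, (a < n)%N -> (b < n)%N -> kappa a = kappa b -> a = b.

Lemma sqdiff_prod_neq0 X Y : sqdiff_prod X Y != 0.
Proof.
apply/prodf_neq0 => a _; apply/prodf_neq0 => b /andP[_ neq_ba]; rewrite sqrf_eq0 subr_eq0.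
by apply: contra neq_ba => /eqP/kappa_inj eq_ba; apply/eqP/val_inj/eq_ba.
Qed.

Lemma KK_neq0 X : KK kappa X != 0.
Proof.
apply: contraNneq (sqdiff_prod_neq0 X X) => KK0.
by rewrite sqdiff_prod_id KK0 expr0n.
Qed.

End SquaredDifferences.

Section MinorsOfA.
Variables (F : fieldType) (n : nat) (kappa beta : nat -> F).
Hypothesis kappa_inj : forall a b, (a < n)%N -> (b < n)%N -> kappa a = kappa b -> a = b.
Hypothesis beta_neq0 : forall m, (m < n)%N -> beta m != 0.

Lemma prod_beta_neq0 (X : {set 'I_n}) : \prod_(a in X) beta a != 0.
Proof. by apply/prodf_neq0 => a _; apply: beta_neq0. Qed.

Lemma alphaE k (J : {set 'I_n}) :
  let R := Ik k n :\: J in let A := J :\: Ik k n in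
  alpha k kappa beta J =
  KK kappa R ^+ 2 * KK kappa A ^+ 2 / sqdiff_prod kappa R A *
  ((\prod_(a in R) beta a) / \prod_(b in A) beta b).
Proof.
rewrite /alpha !KK_sqr; congr (_ / _ * _); apply: eq_bigr => a Ra.
apply: eq_bigl => b; apply/esym/andb_idr => Ab; apply: contraTneq Ab => ->.
by move: Ra; rewrite !inE => /andP[/negbTE-> _]; rewrite andbF.
Qed.

Lemma node_gap_ratio_sqr k (J : {set 'I_n}) : (k <= n)%N ->
  (\prod_(a in Ik k n) (beta a * node_gap k kappa a ^+ 2)) /
  (\prod_(a in J) (beta a * node_gap k kappa a ^+ 2)) * KK kappa J ^+ 2 =
  alpha k kappa beta J * KK kappa (Ik k n) ^+ 2.
Proof.
move=> le_kn; rewrite !big_split /= -!expr2 !prod_node_gap_sqr // alphaE.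
set I := Ik k n.
rewrite [\prod_(a in I) beta a](big_setID J) [\prod_(a in J) beta a](big_setID I) /=.
rewrite (KK_sqr_setID kappa J I) (KK_sqr_setID kappa I J).
rewrite (sqdiff_prod_setIDl kappa I I J) (sqdiff_prod_setIDl kappa J I I) (setIC I J).
rewrite (sqdiff_prod_setIDr kappa (I :\: J) I J) (sqdiff_prod_setIDr kappa (J :\: I) I J).
rewrite (setIC I J) sqdiff_prod_id (sqdiff_prodC kappa (J :\: I) (J :&: I)).
rewrite (sqdiff_prodC kappa (I :\: J) (J :&: I)) (sqdiff_prodC kappa (J :\: I) (I :\: J)).
by field; rewrite ?sqdiff_prod_neq0 ?KK_neq0 ?prod_beta_neq0.
Qed.

Lemma det_colsub_matA (J : {set 'I_n}) : (#|J| <= n)%N ->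
  \det (colsub enum_val (matA #|J| n kappa beta)) =
  (\prod_(a in Ik #|J| n) (beta a * node_gap #|J| kappa a ^+ 2)) /
  (\prod_(a in J) (beta a * node_gap #|J| kappa a ^+ 2)) *
  KK kappa J / KK kappa (Ik #|J| n).
Proof.
move=> le_Jn.
rewrite colsub_matA // !det_mulmx !det_diag.
have := det_lagrange_mx kappa (fun p : 'I_#|J| => kappa (enum_val p)).
rewrite (det_Vandermonde_Ik _ le_Jn) det_Vandermonde_set => detW.
have -> : \det (lagrange_mx kappa (fun p : 'I_#|J| => kappa (enum_val p))) =
    (\prod_(i < #|J|) node_gap #|J| kappa i) * KK kappa J / KK kappa (Ik #|J| n).
  by apply: (mulIf (KK_neq0 kappa_inj (Ik #|J| n))); rewrite divfK ?KK_neq0.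
under eq_bigr do rewrite mxE.
under [X in _ * _ * X]eq_bigr do rewrite mxE.
have prodJ :
    \prod_(i < #|J|) (beta (enum_val i) * node_gap #|J| kappa (enum_val i) ^+ 2) =
    \prod_(a in J) (beta a * node_gap #|J| kappa a ^+ 2).
  by rewrite [RHS]big_enum_val.
rewrite prodfV prodJ (big_Ik _ _ (fun a => beta a * node_gap #|J| kappa a ^+ 2)) //.
have -> : \prod_(i < #|J|) (beta i * node_gap #|J| kappa i ^+ 2) =
    \prod_(i < #|J|) (beta i * node_gap #|J| kappa i) * \prod_(i < #|J|) node_gap #|J| kappa i.
  by rewrite -big_split; apply: eq_bigr => i _; rewrite expr2 mulrA.
have DJ_neq0 : \prod_(a in J) (beta a * node_gap #|J| kappa a ^+ 2) != 0.
  apply/prodf_neq0 => a _.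
  by rewrite mulf_neq0 ?expf_neq0 ?beta_neq0 ?(node_gap_neq0 le_Jn kappa_inj).
by field; rewrite DJ_neq0 KK_neq0.
Qed.

End MinorsOfA.

Lemma eq_mul_div_of_sqr (F : fieldType) (x y u v : F) : u != 0 -> v != 0 ->
  x * u ^+ 2 = y * v ^+ 2 -> x * u / v = y * v / u.
Proof.
move=> u_neq0 v_neq0 eq_sqr.
have -> : x * u / v = x * u ^+ 2 / (u * v) by field; rewrite u_neq0 v_neq0.
by rewrite eq_sqr; field; rewrite u_neq0 v_neq0.
Qed.

Theorem proposition5p2 (R : realType) (k n : nat) (kappa beta : nat -> R[i])
  (hk : (1 <= k)%N) (hkn : (k < n)%N)
  (hkappa : forall a b : nat, (a < n)%N -> (b < n)%N -> kappa a = kappa b -> a = b)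
  (hbeta0 : beta 0%N = 1)
  (hbeta : forall m : nat, (0 < m < n)%N -> beta m != 0)
  (J : {set 'I_n}) (HJ : #|J| = k) :
  maxminor (matA k n kappa beta) HJ =
    alpha k kappa beta J * KK kappa (Ik k n) / KK kappa J.
Proof.
subst k; have le_Jn := ltnW hkn.
have beta_neq0 m : (m < n)%N -> beta m != 0.
  by case: m => [|m] m_n; [rewrite hbeta0 oner_neq0 | apply: hbeta].
have -> : maxminor (matA #|J| n kappa beta) erefl =
          \det (colsub enum_val (matA #|J| n kappa beta)).
  by congr (\det _); apply/matrixP => i j; rewrite !mxE cast_ord_id.
rewrite det_colsub_matA //; apply: eq_mul_div_of_sqr; rewrite ?KK_neq0 //.
exact: node_gap_ratio_sqr.
Qed.
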